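(* Let $n\ge 3$, let $q_1,q_2$ be powers of a prime $p$, let $q=q_1\otimes q_2=q_1^d$, let $a$ be the smallest prime divisor of $n$, and assume $d<n-(n/a)$. Let $R=A(n,q_1,q_2)$, let $S$ be the subring of block-diagonal elements $\begin{pmatrix} A & 0\\ 0 & b\end{pmatrix}$ ($A\in M_n(\mathbb{F}_{q_1})$, $b\in\mathbb{F}_{q_2}$), identified with $M_n(\mathbb{F}_{q_1})\oplus\mathbb{F}_{q_2}$, and let $J$ be the set of elements $\begin{pmatrix} 0 & v\\ 0 & 0\end{pmatrix}$ ($v\in M_{n\times1}(\mathbb{F}_q)$). For $x\in J$ let $C_S(x)=\{s\in S: sx=xs\}$. Let $\mathscr{C}$ be the set of subrings of $S$ consisting of (i) all subrings $T_U\oplus\mathbb{F}_{q_2}$, where $U$ ranges over the $d$-dimensional subspaces of $\mathbb{F}_{q_1}^n$ and $T_U=\{A\in M_n(\mathbb{F}_{q_1}): AU\subseteq U\}$; and (ii) all subrings $M_n(\mathbb{F}_{q_1})\oplus\mathbb{F}_r$, where $\mathbb{F}_r$ ranges over the maximal subfields of $\mathbb{F}_{q_2}$ that contain $\mathbb{F}_{q_1}\cap\mathbb{F}_{q_2}$. Then $\bigcup_{x\in J\setminus\{0\}}C_S(x)\subseteq\bigcup_{M\in\mathscr{C}}M$, and $|\mathscr{C}|=\binom{n}{d}_{q_1}+\omega(d)$.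
   Context: For powers $q_1=p^{d_1}$, $q_2=p^{d_2}$ of a prime $p$, $q_1\otimes q_2:=p^{\operatorname{lcm}(d_1,d_2)}$; $\mathbb{F}_{q_1},\mathbb{F}_{q_2}$ are subfields of $\mathbb{F}_q$. $A(n,q_1,q_2)$ is the subring of $M_{n+1}(\mathbb{F}_q)$ of all block matrices $\begin{pmatrix} A & v\\ 0 & b\end{pmatrix}$ with $A\in M_n(\mathbb{F}_{q_1})$, $v\in M_{n\times 1}(\mathbb{F}_q)$, $b\in\mathbb{F}_{q_2}$. $\omega(m)$ is the number of distinct prime divisors of $m$ ($\omega(1)=0$), and $\binom{n}{k}_q$ is the $q$-binomial coefficient (number of $k$-dimensional subspaces of $\mathbb{F}_q^n$). *)

From HB Require Import structures.
From mathcomp Require Import all_boot all_algebra.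
From Stdlib Require Import ClassicalEpsilon.
Set Implicit Arguments. Unset Strict Implicit. Unset Printing Implicit Defensive.
Import GRing.Theory.
Local Open Scope ring_scope.

Definition pb (P : Prop) : bool :=
  if excluded_middle_informative P then true else false.

Lemma pbP (P : Prop) : reflect P (pb P).
Proof. by rewrite /pb; case: excluded_middle_informative => h; constructor. Qed.

Fixpoint qbinom (q n k : nat) : nat :=
  match n, k with
  | _, 0 => 1
  | 0, _.+1 => 0
  | n'.+1, k'.+1 => (qbinom q n' k' + q ^ k'.+1 * qbinom q n' k'.+1)%N
  end.

Definition omega (m : nat) : nat := size (primes m).

(* The ring S = M_n(F_q1) (+) F_q2 is represented by pairs (A, b);
   F_q1, F_q2 are embedded in F_q by the field morphisms i1, i2. *)
Section Defs.
Variables (F1 F2 F : finFieldType) (i1 : {rmorphism F1 -> F})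
  (i2 : {rmorphism F2 -> F}) (n : nat).

Definition Sembed (s : 'M[F1]_n * F2) : 'M[F]_(n + 1) :=
  block_mx (map_mx i1 s.1) 0 0 (i2 s.2)%:M.

Definition Jembed (v : 'cV[F]_n) : 'M[F]_(n + 1) := block_mx 0 v 0 0.

Definition CS (v : 'cV[F]_n) : {set 'M[F1]_n * F2} :=
  [set s | Sembed s *m Jembed v == Jembed v *m Sembed s].

Definition TU (U : {vspace 'cV[F1]_n}) : {set 'M[F1]_n * F2} :=
  [set s | [forall u : 'cV[F1]_n, (u \in U) ==> (s.1 *m u \in U)]].

Definition is_subfield (K : {set F2}) : bool :=
  [&& 1 \in K,
      [forall x in K, forall y in K, (x - y \in K) && (x * y \in K)] &
      [forall x in K, (x != 0) ==> (x^-1 \in K)]].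

Definition maximal_subfield (K : {set F2}) : bool :=
  [&& is_subfield K, K != setT &
      [forall K' : {set F2}, (is_subfield K' && (K \proper K')) ==> (K' == setT)]].

(* K contains F_q1 \cap F_q2 (intersection taken inside F_q) *)
Definition contains_int (K : {set F2}) : bool :=
  [forall y : F2, [exists x : F1, i1 x == i2 y] ==> (y \in K)].

Definition MK (K : {set F2}) : {set 'M[F1]_n * F2} := [set s | s.2 \in K].

Definition inC (d : nat) (M : {set 'M[F1]_n * F2}) : Prop :=
  (exists U : {vspace 'cV[F1]_n}, \dim U = d /\ M = TU U) \/
  (exists K : {set F2}, [&& maximal_subfield K & contains_int K] /\ M = MK K).

Definition Cset (d : nat) : {set {set 'M[F1]_n * F2}} := [set M | pb (inC d M)].

End Defs.

(* Let s = (A, b) commute with a nonzero [[0, v], [0, 0]], i.e. A v = b v in F_q^n.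
   If b lies in a maximal subfield of F_q2 containing F_q1 ∩ F_q2 (these are the
   subfields of codegree l for the primes l dividing d = [F_q : F_q1], whence the
   omega(d) rings of type (ii)), s lies in a ring of type (ii).  Otherwise
   F_q1(b) = F_q, so 1, b, ..., b^(d-1) is an F_q1-basis of F_q; the coordinates of v
   in this basis form an n x d matrix C over F_q1 with A C = C N, N the matrix of
   multiplication by b, and C has a left inverse.  Hence the column space of C is a
   d-dimensional A-invariant subspace U and s lies in T_U (+) F_q2.
   For the count, U |-> T_U is injective on d-dimensional subspaces, the subspaces are
   counted through free d-tuples, and no T_U (+) F_q2 is of type (ii) because d < n. *)

From HB Require Import structures.
From mathcomp Require Import all_boot all_algebra all_fingroup all_solvable all_field zify.
Set Implicit Arguments. Unset Strict Implicit. Unset Printing Implicit Defensive.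
Import GRing.Theory FinRing.Theory.

Lemma dvdn_predn_exp2l m a b :
  (1 < m)%N -> ((m ^ a).-1 %| (m ^ b).-1)%N = (a %| b)%N.
Proof.
move=> m1; apply/idP/idP => [|/dvdnP[k ->]]; last first.
  by rewrite mulnC expnM (predn_exp (m ^ a)) dvdn_mulr.
set r := (b %% a)%N; set x := ((m ^ a) ^ (b %/ a))%N.
have pos k : (0 < m ^ k)%N by rewrite expn_gt0 (ltnW m1).
have x_gt0 : (0 < x)%N by rewrite expn_gt0 pos.
have bE : (m ^ b).-1 = (m ^ r * x.-1 + (m ^ r).-1)%N.
  rewrite [in LHS](divn_eq b a) mulnC expnD expnM -/x -/r.
  by have := pos r; nia.
rewrite bE dvdn_addr; last by rewrite dvdn_mull // /x (predn_exp (m ^ a)) dvdn_mulr.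
move=> dvd_r; rewrite /dvdn -/r; apply: contraTT dvd_r => r_neq0.
have m_r : (1 < m ^ r)%N by rewrite -(expn0 m) ltn_exp2l // lt0n.
have [a0 | a_gt0] := posnP a; first by rewrite a0 expn0 dvd0n; lia.
have r_lt_a : (r < a)%N by rewrite ltn_mod.
by rewrite gtnNdvd //; [lia | have := ltn_exp2l r a m1; lia].
Qed.

Section QBinomial.
Variable q : nat.
Hypothesis q_gt0 : (0 < q)%N.

Definition qfalling n k := (\prod_(i < k) (q ^ (n - i) - 1))%N.

Lemma qfallingSS n k : qfalling n.+1 k.+1 = ((q ^ n.+1 - 1) * qfalling n k)%N.
Proof. by rewrite /qfalling big_ord_recl subn0. Qed.

Lemma qfallingSr n k : qfalling n k.+1 = (qfalling n k * (q ^ (n - k) - 1))%N.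
Proof. by rewrite /qfalling big_ord_recr. Qed.

Lemma qfalling_small n k : (n < k)%N -> qfalling n k = 0%N.
Proof. by move=> lt_nk; rewrite /qfalling (bigD1 (Ordinal lt_nk)) //= subnn subnn. Qed.

Lemma qbinom_qfalling n k : (qbinom q n k * qfalling k k = qfalling n k)%N.
Proof.
elim: n k => [|n IHn] [|k] /=; rewrite ?mul1n //.
- by rewrite mul0n qfalling_small.
- by rewrite /qfalling !big_ord0.
rewrite mulnDl -mulnA IHn !qfallingSS mulnCA IHn qfallingSr.
have [le_kn | lt_nk] := leqP k n; last by rewrite qfalling_small // !(muln0, mul0n).
have qk_gt0 : (0 < q ^ k.+1)%N by rewrite expn_gt0 q_gt0.
have qnk_gt0 : (0 < q ^ (n - k))%N by rewrite expn_gt0 q_gt0.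
have qnE : (q ^ n.+1 = q ^ k.+1 * q ^ (n - k))%N by rewrite -expnD; congr (q ^ _)%N; lia.
rewrite qnE (mulnC (qfalling n k)) mulnA -mulnDl mulnBr muln1; congr (_ * _)%N.
have : (q ^ k.+1 <= q ^ k.+1 * q ^ (n - k))%N by rewrite leq_pmulr.
lia.
Qed.

Lemma qbinom_prod n k :
  (qbinom q n k * \prod_(i < k) (q ^ k - q ^ i) = \prod_(i < k) (q ^ n - q ^ i))%N.
Proof.
have subX m (i : 'I_k) : (q ^ m - q ^ i = q ^ i * (q ^ (m - i) - 1))%N.
  have [le_im | lt_mi] := leqP i m; first by rewrite mulnBr muln1 -expnD subnKC.
  have : (q ^ m <= q ^ i)%N by rewrite leq_pexp2l // ltnW.
  by rewrite (_ : m - i = 0)%N ?muln0; lia.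
rewrite !(eq_bigr _ (fun i _ => subX _ i)) !big_split /= mulnCA.
by rewrite [X in (_ * X)%N]qbinom_qfalling.
Qed.

End QBinomial.

Local Open Scope ring_scope.

Section SubfieldTheory.
Variable L : finFieldType.
Implicit Types K : {set L}.

Section OneSubfield.
Variable K : {set L}.
Hypothesis sK : is_subfield K.

Lemma subfield1 : 1 \in K. Proof. by case/and3P: sK. Qed.

Lemma subfieldBM : {in K &, forall x y, (x - y \in K) && (x * y \in K)}.
Proof.
move=> x y xK yK; case/and3P: sK => _ /forall_inP closedK _.
exact: (forall_inP (closedK x xK) y yK).
Qed.

Lemma subfieldB : {in K &, forall x y, x - y \in K}.
Proof. by move=> x y xK yK; case/andP: (subfieldBM xK yK). Qed.

Lemma subfieldM : {in K &, forall x y, x * y \in K}.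
Proof. by move=> x y xK yK; case/andP: (subfieldBM xK yK). Qed.

Lemma subfield0 : 0 \in K. Proof. by rewrite -(subrr 1) subfieldB ?subfield1. Qed.

Lemma subfieldV : {in K, forall x, x^-1 \in K}.
Proof.
move=> x xK; have [-> | x_neq0] := eqVneq x 0; first by rewrite invr0 subfield0.
by case/and3P: sK => _ _ /forall_inP/(_ x xK); rewrite x_neq0.
Qed.

Lemma subfieldD : {in K &, forall x y, x + y \in K}.
Proof.
move=> x y xK yK; have yNK : - y \in K by rewrite -sub0r subfieldB ?subfield0.
by rewrite -[y]opprK subfieldB.
Qed.

Lemma subfield_addgroup : group_set K.
Proof. by apply/group_setP; split=> [|x y xK yK]; rewrite ?subfield0 ?zmodMgE ?subfieldD. Qed.

Lemma card_subfield_dvd : (#|K| %| #|L|)%N.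
Proof. by rewrite -cardsT (cardSg (subsetT (Group subfield_addgroup))). Qed.

Definition subfield_units := [set u : {unit L} | val u \in K].

Lemma subfield_units_group : group_set subfield_units.
Proof.
apply/group_setP; split=> [|u v]; rewrite !inE ?val_unit1 ?subfield1 //.
by rewrite val_unitM; apply: subfieldM.
Qed.

Lemma card_subfield_units : #|subfield_units| = #|K|.-1.
Proof.
rewrite (cardsD1 0 K) subfield0 add1n /= -(card_imset _ val_inj).
apply: eq_card => x; rewrite !inE; apply/imsetP/andP => [[u] | [x_neq0 xK]].
  by rewrite inE => uK ->; rewrite -unitfE (valP u).
by exists (finField_unit x_neq0); rewrite ?inE.
Qed.

Lemma subfield_expr_card x : x \in K -> x ^+ #|K| = x.
Proof.
move=> xK; have cardK_gt0 : (0 < #|K|)%N by apply/card_gt0P; exists 0; apply: subfield0.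
have [-> | x_neq0] := eqVneq x 0; first by rewrite expr0n gtn_eqF.
have uK : finField_unit x_neq0 \in Group subfield_units_group by rewrite inE.
have := expg_cardG uK; rewrite /= card_subfield_units => /(congr1 val).
rewrite val_unitX /= => xK1.
by rewrite -(prednK cardK_gt0) exprS xK1 mulr1.
Qed.

End OneSubfield.

Lemma is_subfieldT : is_subfield [set: L].
Proof.
apply/and3P; split; first by rewrite inE.
  by apply/forall_inP => x _; apply/forall_inP => y _; rewrite !inE.
by apply/forall_inP => x _; rewrite inE implybT.
Qed.

Lemma card_fixed_expr_le c : (1 < c)%N -> (#|[set x : L | x ^+ c == x]| <= c)%N.
Proof.
move=> c_gt1; have size_p : size ('X^c - 'X : {poly L}) = c.+1.
  by rewrite size_polyDl ?size_polyXn ?size_polyN ?size_polyX.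
have p_neq0 : ('X^c - 'X : {poly L}) != 0 by rewrite -size_poly_gt0 size_p.
rewrite cardE -ltnS -size_p max_poly_roots ?enum_uniq //.
by apply/allP => x; rewrite mem_enum inE rootE !hornerE => /eqP ->; rewrite subrr.
Qed.

Lemma subfieldE K : is_subfield K -> K = [set x | x ^+ #|K| == x].
Proof.
move=> sK; have cK : (1 < #|K|)%N.
  rewrite (cardsD1 0) subfield0 // ltnS card_gt0; apply/set0Pn.
  by exists 1; rewrite !inE oner_neq0 subfield1.
apply/eqP; rewrite eqEcard card_fixed_expr_le // andbT.
by apply/subsetP => x xK; rewrite inE subfield_expr_card.
Qed.

Variables (p m : nat).
Hypotheses (p_pr : prime p) (cardL : #|L| = (p ^ m)%N).

Lemma card_subfieldE K : is_subfield K -> #|K| = (p ^ logn p #|K|)%N.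
Proof.
move=> sK; have := card_subfield_dvd sK; rewrite cardL.
by case/(dvdn_pfactor _ _ p_pr) => e _ ->; rewrite pfactorK.
Qed.

Lemma subfield_subsetE K K' : is_subfield K -> is_subfield K' ->
  (K \subset K') = (logn p #|K| %| logn p #|K'|)%N.
Proof.
move=> sK sK'; apply/idP/idP => [sub | /dvdnP[k ek]].
  rewrite -(dvdn_predn_exp2l _ _ (prime_gt1 p_pr)) -!card_subfieldE //.
  rewrite -!card_subfield_units //.
  apply: (@cardSg _ (Group (subfield_units_group sK')) (Group (subfield_units_group sK))).
  by apply/subsetP => u; rewrite !inE => /(subsetP sub).
rewrite [K](subfieldE sK) [K'](subfieldE sK').
apply/subsetP => x; rewrite !inE (card_subfieldE sK') ek mulnC expnM -card_subfieldE //.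
move=> /eqP xK; apply/eqP.
by elim: k {ek} => [|k IHk]; rewrite ?expr1 // expnSr exprM IHk.
Qed.

Lemma logn_card_subfield_dvd K : is_subfield K -> (logn p #|K| %| m)%N.
Proof.
move=> sK; rewrite -(pfactorK m p_pr) -cardL -cardsT.
by rewrite -subfield_subsetE ?subsetT ?is_subfieldT.
Qed.

Definition frobenius_fixed e := [set x : L | x ^+ (p ^ e) == x].

Lemma frobenius_fixed_subfield e : is_subfield (frobenius_fixed e).
Proof.
have pcharL : p \in [pchar L] by apply: card_finPcharP cardL p_pr.
have pe : [pchar L].-nat (p ^ e)%N by rewrite (eq_pnat _ (pcharf_eq pcharL)) pnatX pnat_id.
apply/and3P; split; first by rewrite inE expr1n.
  apply/forall_inP => x /[!inE] /eqP xF; apply/forall_inP => y /[!inE] /eqP yF.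
  by rewrite exprDn_pchar // exprNn_pchar // exprMn xF yF !eqxx.
by apply/forall_inP => x /[!inE] /eqP xF; rewrite exprVn xF eqxx implybT.
Qed.

Lemma card_frobenius_fixed e : (0 < e)%N -> (e %| m)%N -> #|frobenius_fixed e| = (p ^ e)%N.
Proof.
move=> e_gt0 dvd_em; have p_gt1 := prime_gt1 p_pr.
have pe_gt1 : (1 < p ^ e)%N by rewrite -(expn0 p) ltn_exp2l.
apply/eqP; rewrite eqn_leq card_fixed_expr_le //=.
(* The subgroup of order p^e - 1 of the cyclic unit group consists of fixed points. *)
have /cyclicP[z defU] := field_unit_group_cyclic [set: {unit L}]%G.
set M := (p ^ e).-1; set k := (#[z]%g %/ M)%N.
have kM : (#[z]%g = k * M)%N.
  rewrite /k divnK // orderE -defU card_finField_unit cardL /M.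
  by case/dvdnP: dvd_em => j ->; rewrite mulnC expnM (predn_exp (p ^ e)) dvdn_mulr.
have k_gt0 : (0 < k)%N by move: (order_gt0 z); rewrite kM muln_gt0 => /andP[].
have oH : #|<[z ^+ k]>%g| = M by rewrite -orderE orderXdiv kM ?dvdn_mulr // mulKn.
have sub : [set val u | u in <[z ^+ k]>%g] \subset frobenius_fixed e :\ 0.
  apply/subsetP => _ /imsetP[u uH ->]; rewrite !inE -unitfE (valP u) /=.
  rewrite -(prednK (ltnW pe_gt1)) exprS -val_unitX -/M -oH expg_cardG //.
  by rewrite val_unit1 mulr1.
rewrite (cardsD1 0) inE expr0n gtn_eqF ?(ltnW pe_gt1) // mulr0n eqxx add1n.
rewrite -[(p ^ e)%N]prednK ?(ltnW pe_gt1) // ltnS -/M -oH.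
by rewrite -(card_imset _ val_inj) subset_leq_card.
Qed.

End SubfieldTheory.

Lemma subfield_eqT (L : finFieldType) p m (K : {set L}) :
  prime p -> #|L| = (p ^ m)%N -> is_subfield K -> (K == setT) = (logn p #|K| == m).
Proof.
move=> p_pr cardL sK; apply/eqP/eqP => [-> | eK].
  by rewrite cardsT cardL pfactorK.
by apply/eqP; rewrite eqEcard subsetT cardsT cardL (card_subfieldE p_pr cardL sK) eK /=.
Qed.

Lemma finField_invE (L : finFieldType) (x : L) : x != 0 -> x^-1 = x ^+ #|L|.-2.
Proof.
move=> x_neq0; have L_gt1 := finNzRing_gt1 L.
have x_pred : x ^+ #|L|.-1 = 1.
  by apply: (mulfI x_neq0); rewrite -exprS prednK ?expf_card ?mulr1 //; apply: ltnW.
by apply: (mulfI x_neq0); rewrite mulfV // -exprS -x_pred prednK // -subn1 subn_gt0.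
Qed.

Section SubfieldMorphism.
Variables (L L' : finFieldType) (f : {rmorphism L -> L'}).

Lemma subfield_imset K : is_subfield K -> is_subfield (f @: K).
Proof.
move=> sK; apply/and3P; split; first by apply/imsetP; exists 1; rewrite ?rmorph1 ?subfield1.
  apply/forall_inP => _ /imsetP[x xK ->]; apply/forall_inP => _ /imsetP[y yK ->].
  by rewrite -rmorphB -rmorphM !imset_f ?subfieldB ?subfieldM.
by apply/forall_inP => _ /imsetP[x xK ->]; rewrite -fmorphV imset_f ?subfieldV ?implybT.
Qed.

Lemma subfield_preimset K' : is_subfield K' -> is_subfield (f @^-1: K').
Proof.
move=> sK'; apply/and3P; split; first by rewrite inE rmorph1 subfield1.
  apply/forall_inP => x /[!inE] xK; apply/forall_inP => y /[!inE] yK.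
  by rewrite rmorphB rmorphM subfieldB ?subfieldM.
by apply/forall_inP => x /[!inE] xK; rewrite fmorphV subfieldV ?implybT.
Qed.

Lemma card_fmorph_imset (A : {set L}) : #|f @: A| = #|A|.
Proof. by rewrite card_imset //; apply: fmorph_inj. Qed.

End SubfieldMorphism.

Lemma subfieldI (L : finFieldType) (K K' : {set L}) :
  is_subfield K -> is_subfield K' -> is_subfield (K :&: K').
Proof.
move=> sK sK'; apply/and3P; split; first by rewrite inE !subfield1.
  apply/forall_inP => x /setIP[xK xK']; apply/forall_inP => y /setIP[yK yK'].
  by rewrite !inE !subfieldB ?subfieldM.
by apply/forall_inP => x /setIP[xK xK']; rewrite !inE !subfieldV ?implybT.
Qed.

Section FreeTuples.
Variables (F : finFieldType) (n : nat).
Local Notation vT := 'cV[F]_n.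

Lemma card_subv_notin_span (U : {vspace vT}) (X : seq vT) :
  free X -> all (mem U) X ->
  #|[set x : vT | (x \in U) && (x \notin <<X>>%VS)]| = (#|F| ^ \dim U - #|F| ^ size X)%N.
Proof.
move=> fX /allP XU; have XsubU : (<<X>> <= U)%VS by apply/span_subvP.
rewrite (_ : [set x | _] = [set x | x \in U] :\: [set x | x \in <<X>>%VS]); last first.
  by apply/setP => x; rewrite !inE andbC.
rewrite cardsD (_ : _ :&: _ = [set x | x \in <<X>>%VS]); last first.
  by apply/setP => x; rewrite !inE andb_idl // => /(subvP XsubU).
by rewrite !cardsE !card_vspace (eqP fX).
Qed.

Lemma card_free_tuples_in (U : {vspace vT}) k :
  #|[set X : k.-tuple vT | free X && all (mem U) X]| =
  (\prod_(i < k) (#|F| ^ \dim U - #|F| ^ i))%N.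
Proof.
elim: k => [|k IHk].
  rewrite big_ord0 (_ : [set X | _] = setT) ?cardsT ?card_tuple //.
  by apply/setP => X; rewrite !inE tuple0 nil_free.
pose FU k := [set X : k.-tuple vT | free X && all (mem U) X].
pose extend (X : k.-tuple vT) := [set x : vT | (x \in U) && (x \notin <<X>>%VS)].
rewrite big_ord_recr /= -IHk -/(FU _) -/(FU _) -[in LHS]sum1_card.
rewrite (reindex (fun u : k.-tuple vT * vT => [tuple of u.2 :: u.1])) /=; last first.
  exists (fun t : k.+1.-tuple vT => ([tuple of behead t], thead t)) => [[X x] _ | t _] /=.
    by congr (_, _); apply: val_inj.
  by rewrite [RHS]tuple_eta.
rewrite (eq_bigl (fun u => (u.1 \in FU k) && (u.2 \in extend u.1))); last first.
  move=> [X x]; rewrite !inE /= free_cons.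
  by case: (x \notin _); case: (free X); case: (x \in U); case: (all _ X).
rewrite -(pair_big_dep (mem (FU k)) (fun X x => x \in extend X) (fun _ _ => 1%N)) /=.
rewrite -[in RHS]sum1_card big_distrl /=; apply: eq_bigr => X /[!inE] /andP[fX XU].
by rewrite sum1_card card_subv_notin_span // size_tuple mul1n.
Qed.

End FreeTuples.

Lemma row_mul_eq1 (F : fieldType) n (w : 'cV[F]_n) : w != 0 -> exists f : 'rV_n, f *m w = 1.
Proof.
move=> w_neq0; have /row_freeP[B wB] : row_free w^T.
  by rewrite /row_free rank_rV -trmx0 (inj_eq trmx_inj) w_neq0.
by exists B^T; rewrite -[w]trmxK -trmx_mul wB trmx1.
Qed.

Lemma dim_cV (F : fieldType) n : dim 'cV[F]_n = n.
Proof. by rewrite dim_matrix; apply: muln1. Qed.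

Section StabilizerRings.
Variables (F1 F2 : finFieldType) (n : nat).
Local Notation vT := 'cV[F1]_n.

Lemma TU_rank1 (U : {vspace vT}) (u : vT) (f : 'rV_n) (b : F2) :
  u \in U -> (u *m f, b) \in TU F2 U.
Proof.
move=> uU; rewrite inE; apply/forall_inP => x _.
by rewrite -mulmxA [f *m x]mx11_scalar mul_mx_scalar memvZ.
Qed.

Lemma TU_subv (U U' : {vspace vT}) : U' != 0%VS -> TU F2 U = TU F2 U' -> (U <= U')%VS.
Proof.
move=> U'_neq0 eTU; apply/subvP => u uU.
have [f fw] : exists f : 'rV_n, f *m vpick U' = 1 by apply: row_mul_eq1; rewrite vpick0.
have := TU_rank1 f (0 : F2) uU; rewrite eTU inE => /forall_inP/(_ _ (memv_pick U')).
by rewrite -mulmxA fw mulmx1.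
Qed.

Lemma TU_inj (U U' : {vspace vT}) : \dim U = \dim U' -> (0 < \dim U)%N ->
  TU F2 U = TU F2 U' -> U = U'.
Proof.
move=> dimUU' dimU_gt0 eTU; have U'_neq0 : U' != 0%VS by rewrite -dimv_eq0 -dimUU' -lt0n.
by apply/eqP; rewrite eqEdim TU_subv // dimUU' /=.
Qed.

Lemma card_TU_dim d : (0 < d)%N ->
  #|[set M : {set 'M[F1]_n * F2} | pb (exists U : {vspace vT}, \dim U = d /\ M = TU F2 U)]| =
  qbinom #|F1| n d.
Proof.
move=> d_gt0; set FT := [set X : d.-tuple vT | free X].
have dim_span (X : d.-tuple vT) : free X -> \dim <<X>> = d by move/eqP ->; rewrite size_tuple.
pose TUspan (X : d.-tuple vT) := TU F2 <<X>>%VS.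
have -> : [set M | pb (exists U : {vspace vT}, \dim U = d /\ M = TU F2 U)] = TUspan @: FT.
  apply/setP => M; rewrite inE; apply/pbP/imsetP => [[U [dimU ->]] | [X /[!inE] fX ->]].
    have sz : size (vbasis U) == d by rewrite size_tuple dimU.
    have /andP[/eqP spanU free_basis] := vbasisP U.
    by exists (Tuple sz); rewrite ?inE // /TUspan /= spanU.
  by exists <<X>>%VS; split; rewrite ?dim_span.
(* Double counting: a d-dimensional subspace is spanned by exactly
   prod_(i < d) (q^d - q^i) free d-tuples. *)
have q_gt1 := finNzRing_gt1 F1.
have frames_gt0 : (0 < \prod_(i < d) (#|F1| ^ d - #|F1| ^ i))%N.
  by rewrite prodn_gt0 // => i; rewrite subn_gt0 ltn_exp2l.
apply/eqP; rewrite -(eqn_pmul2r frames_gt0) qbinom_prod ?(ltnW q_gt1) //.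
have <- : #|FT| = (\prod_(i < d) (#|F1| ^ n - #|F1| ^ i))%N.
  have := card_free_tuples_in (fullv : {vspace vT}) d.
  rewrite dimvf dim_cV => <-.
  by apply: eq_card => X; rewrite !inE andb_idr // => _; apply/allP => x _; apply: memvf.
apply/eqP; rewrite -[#|FT|]sum1_card (partition_big_imset TUspan) /= -sum_nat_const.
apply: eq_bigr => _ /imsetP[X0 /[!inE] fX0 ->]; rewrite sum1_card.
have := card_free_tuples_in <<X0>>%VS d; rewrite dim_span // => <-; apply: eq_card => X.
symmetry; rewrite unfold_in /= !inE; apply/andP/andP => [[fX /eqP eTU] | [fX /allP XinX0]].
  split=> //; apply/allP => x xX.
  by rewrite -(TU_inj _ _ eTU) ?dim_span //; apply: (memv_span xX).
split=> //; apply/eqP; congr (TU F2 _); apply/eqP.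
by rewrite eqEdim !dim_span // leqnn andbT; apply/span_subvP.
Qed.

Lemma TU_neq_MK (U : {vspace vT}) (K : {set F2}) :
  (0 < \dim U < n)%N -> 1 \in K -> TU F2 U != MK F1 n K.
Proof.
case/andP=> dimU_gt0 dimU_lt K1; apply/eqP => eTU.
have [w wU] : exists w, w \notin U.
  apply/existsP; apply: contraLR dimU_lt; rewrite negb_exists -leqNgt => /forallP Uall.
  have : (fullv <= U)%VS by apply/subvP => x _; have := Uall x; rewrite negbK.
  by move/dimvS; rewrite dimvf dim_cV.
have [f fu] : exists f : 'rV_n, f *m vpick U = 1.
  by apply: row_mul_eq1; rewrite vpick0 -dimv_eq0 -lt0n.
have : (w *m f, 1) \in MK F1 n K by rewrite inE.
rewrite -eTU inE => /forall_inP/(_ _ (memv_pick U)).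
by rewrite -mulmxA fu mulmx1 (negbTE wU).
Qed.

End StabilizerRings.

Lemma CS_eigen (F1 F2 F : finFieldType) (i1 : {rmorphism F1 -> F}) (i2 : {rmorphism F2 -> F})
  n (A : 'M[F1]_n) (b : F2) (v : 'cV[F]_n) :
  (A, b) \in CS i1 i2 v -> map_mx i1 A *m v = i2 b *: v.
Proof.
rewrite inE /Sembed /Jembed /= !mulmx_block => /eqP /eq_block_mx [_ + _ _].
by rewrite !mul0mx addr0 add0r mul_mx_scalar.
Qed.

Lemma MK_inj (F1 F2 : finFieldType) n : injective (@MK F1 F2 n).
Proof. by move=> K K' eMK; apply/setP => y; move/setP/(_ (0, y)): eMK; rewrite !inE. Qed.

Section PowerCoordinates.
Variables (F1 F : fieldType) (i1 : {rmorphism F1 -> F}) (d : nat) (lam : F).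

Definition lam_powers : 'cV[F]_d := \col_(j < d) lam ^+ j.

Definition lam_comb (r : 'rV[F1]_d) : F := (map_mx i1 r *m lam_powers) 0 0.

Lemma lam_combE r : lam_comb r = \sum_(j < d) i1 (r 0 j) * lam ^+ j.
Proof. by rewrite /lam_comb mxE; apply: eq_bigr => j _; rewrite !mxE. Qed.

Lemma lam_comb_rVpoly r : lam_comb r = (map_poly i1 (rVpoly r)).[lam].
Proof.
rewrite lam_combE (horner_coef_wide (n := d)) ?size_map_poly ?size_poly //.
by apply: eq_bigr => j _; rewrite coef_map coef_rVpoly_ord.
Qed.

Lemma lam_comb_row m (M : 'M[F1]_(m, d)) k :
  lam_comb (row k M) = (map_mx i1 M *m lam_powers) k 0.
Proof. by rewrite /lam_comb map_row -row_mul mxE. Qed.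

Lemma lam_comb_delta (t : 'I_d) : lam_comb (delta_mx 0 t) = lam ^+ t.
Proof. by rewrite lam_comb_rVpoly rVpoly_delta map_polyXn hornerXn. Qed.

Section Eigenvector.
Variable crd : F -> 'rV[F1]_d.
Hypotheses (combK : cancel lam_comb crd) (crdK : cancel crd lam_comb).
Variables (n : nat) (A : 'M[F1]_n) (v : 'cV[F]_n) (i0 : 'I_n).
Hypotheses (Av : map_mx i1 A *m v = lam *: v) (v_i0 : v i0 0 = 1).

(* Row k of coord_mx holds the coordinates of v k 0 in the basis (lam ^+ j)_j, and
   mul_lam_mx is the matrix of multiplication by lam in that basis. *)
Definition coord_mx : 'M[F1]_(n, d) := \matrix_(k, j) crd (v k 0) 0 j.
Definition mul_lam_mx : 'M[F1]_d := \matrix_(k, j) crd (lam ^+ k.+1) 0 j.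

Lemma lam_comb_inj : injective lam_comb. Proof. exact: can_inj combK. Qed.

Lemma coord_mxE : map_mx i1 coord_mx *m lam_powers = v.
Proof.
apply/matrixP => k j; rewrite (ord1 j) -lam_comb_row -[RHS]crdK; congr lam_comb.
by apply/rowP => i; rewrite !mxE.
Qed.

Lemma mul_lam_mxE : map_mx i1 mul_lam_mx *m lam_powers = lam *: lam_powers.
Proof.
apply/matrixP => k j; rewrite (ord1 j) -lam_comb_row [X in _ = X]mxE [X in _ = _ * X]mxE.
by rewrite -exprS -[RHS]crdK; congr lam_comb; apply/rowP => i; rewrite !mxE.
Qed.

Lemma coord_mx_intertwine : A *m coord_mx = coord_mx *m mul_lam_mx.
Proof.
apply/row_matrixP => k; apply: lam_comb_inj; rewrite !lam_comb_row !map_mxM -!mulmxA.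
by rewrite coord_mxE mul_lam_mxE Av -scalemxAr coord_mxE.
Qed.

Lemma row_coord_mx_mul_lam t (lt_td : (t < d)%N) :
  row i0 coord_mx *m mul_lam_mx ^+ t = delta_mx 0 (Ordinal lt_td).
Proof.
elim: t lt_td => [|t IHt] lt_td; apply: lam_comb_inj; rewrite lam_comb_delta /=.
  by rewrite expr0 mulmx1 lam_comb_row coord_mxE v_i0.
by rewrite exprSr mulmxA (IHt (ltnW lt_td)) -rowE lam_comb_row mul_lam_mxE !mxE exprS.
Qed.

Lemma coord_mx_intertwineX t : A ^+ t *m coord_mx = coord_mx *m mul_lam_mx ^+ t.
Proof.
elim: t => [|t IHt]; first by rewrite !expr0 mul1mx mulmx1.
by rewrite !exprS -!mulmxE -mulmxA IHt !mulmxA coord_mx_intertwine.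
Qed.

Lemma coord_mx_linv : \matrix_(t < d) row i0 (A ^+ t) *m coord_mx = 1%:M.
Proof.
apply/row_matrixP => t; rewrite row_mul rowK row1 -row_mul.
by rewrite coord_mx_intertwineX row_mul row_coord_mx_mul_lam; congr delta_mx; apply: val_inj.
Qed.

Lemma coord_mx_invariant_subspace :
  exists2 U : {vspace 'cV[F1]_n}, \dim U = d & {in U, forall u, A *m u \in U}.
Proof.
pose f := linfun (mulmx coord_mx : 'cV[F1]_d -> 'cV[F1]_n).
have fE x : f x = coord_mx *m x by rewrite lfunE.
exists (limg f).
  have := limg_ker_dim f fullv; rewrite dimvf dim_cV.
  suff -> : lker f = 0%VS by rewrite capv0 dimv0.
  apply/eqP/lker0P => x y; rewrite !fE => eCm.
  by rewrite -[x]mul1mx -[y]mul1mx -coord_mx_linv -!mulmxA eCm.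
move=> _ /memv_imgP[x _ ->].
by rewrite fE mulmxA coord_mx_intertwine -mulmxA -fE memv_img ?memvf.
Qed.

End Eigenvector.

Lemma eigenvector_invariant_subspace n (A : 'M[F1]_n) (v : 'cV[F]_n) :
  bijective lam_comb -> v != 0 -> map_mx i1 A *m v = lam *: v ->
  exists2 U : {vspace 'cV[F1]_n}, \dim U = d & {in U, forall u, A *m u \in U}.
Proof.
case=> crd combK crdK /cV0Pn[i0 v_i0] Av.
apply: (coord_mx_invariant_subspace combK crdK (v := (v i0 0)^-1 *: v) (i0 := i0)).
  by rewrite -scalemxAr Av !scalerA mulrC.
by rewrite mxE mulVf.
Qed.

End PowerCoordinates.

Section Setting.
Variables (p d1 d2 d : nat) (F1 F2 F : finFieldType).
Variables (i1 : {rmorphism F1 -> F}) (i2 : {rmorphism F2 -> F}).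
Hypotheses (p_pr : prime p) (card_F1 : #|F1| = (p ^ d1)%N) (card_F2 : #|F2| = (p ^ d2)%N).
Hypotheses (card_F : #|F| = (p ^ lcmn d1 d2)%N) (card_F_d : #|F| = (#|F1| ^ d)%N).

Local Notation g := (gcdn d1 d2).
Let p_gt1 := prime_gt1 p_pr.

Lemma d1_gt0 : (0 < d1)%N.
Proof. by have := finNzRing_gt1 F1; rewrite card_F1; case: d1. Qed.

Lemma d2_gt0 : (0 < d2)%N.
Proof. by have := finNzRing_gt1 F2; rewrite card_F2; case: d2. Qed.

Lemma d2_gcdE : d2 = (d * g)%N.
Proof.
have /eqP : (p ^ lcmn d1 d2 = p ^ (d1 * d))%N by rewrite -card_F card_F_d card_F1 expnM.
rewrite eqn_exp2l // => /eqP lcmE; apply/eqP.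
by rewrite -(eqn_pmul2l d1_gt0) mulnA -lcmE muln_lcm_gcd.
Qed.

Lemma d_gt0 : (0 < d)%N.
Proof. by have := d2_gt0; rewrite d2_gcdE muln_gt0 => /andP[]. Qed.

Let g_gt0 : (0 < g)%N. Proof. by rewrite gcdn_gt0 d1_gt0. Qed.

Let I1 := i1 @: [set: F1].
Let I2 := i2 @: [set: F2].

Let subfield_I1 : is_subfield I1. Proof. exact/subfield_imset/is_subfieldT. Qed.
Let subfield_I2 : is_subfield I2. Proof. exact/subfield_imset/is_subfieldT. Qed.
Let logn_I1 : logn p #|I1| = d1. Proof. by rewrite card_fmorph_imset cardsT card_F1 pfactorK. Qed.
Let logn_I2 : logn p #|I2| = d2. Proof. by rewrite card_fmorph_imset cardsT card_F2 pfactorK. Qed.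

Definition common_subfield := [set y : F2 | [exists x : F1, i1 x == i2 y]].

Lemma common_subfieldE : common_subfield = i2 @^-1: I1.
Proof.
apply/setP => y; rewrite !inE; apply/existsP/imsetP => [[x /eqP e] | [x _ e]].
  by exists x.
by exists x; rewrite e.
Qed.

Lemma contains_intE K : contains_int i1 i2 K = (common_subfield \subset K).
Proof.
apply/forallP/subsetP => [h y | h y]; first by rewrite inE => /(implyP (h y)).
by apply/implyP => e; apply: h; rewrite inE.
Qed.

Lemma subfield_common : is_subfield common_subfield.
Proof. by rewrite common_subfieldE; apply: subfield_preimset. Qed.

Lemma card_common_subfield : #|common_subfield| = (p ^ g)%N.
Proof.
have -> : #|common_subfield| = #|I1 :&: I2|.
  rewrite -(card_fmorph_imset i2) common_subfieldE; apply: eq_card => z.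
  apply/imsetP/setIP => [[y /[!inE] yI1 ->] | [zI1 /imsetP[y _ zE]]].
    by split=> //; apply: imset_f.
  by exists y; rewrite // inE -zE.
have subfield_I := subfieldI subfield_I1 subfield_I2.
rewrite (card_subfieldE p_pr card_F subfield_I); congr (p ^ _)%N; apply/eqP.
rewrite eqn_dvd; apply/andP; split.
  rewrite dvdn_gcd -{1}logn_I1 -{1}logn_I2.
  by rewrite -!(subfield_subsetE p_pr card_F) // subsetIl subsetIr.
have dvd_g_lcm : (g %| lcmn d1 d2)%N by apply: dvdn_trans (dvdn_gcdl _ _) (dvdn_lcml _ _).
have subfield_Fg := frobenius_fixed_subfield p_pr card_F g.
have logn_Fg : logn p #|frobenius_fixed F p g| = g.
  by rewrite (card_frobenius_fixed p_pr card_F) // pfactorK.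
rewrite -{1}logn_Fg -(subfield_subsetE p_pr card_F) //.
rewrite subsetI !(subfield_subsetE p_pr card_F) //.
by rewrite logn_I1 logn_I2 logn_Fg dvdn_gcdl dvdn_gcdr.
Qed.

Definition codeg_subfield l := frobenius_fixed F2 p (d2 %/ l).

Lemma subfield_codeg_subfield l : is_subfield (codeg_subfield l).
Proof. exact: (frobenius_fixed_subfield p_pr card_F2). Qed.

Section PrimeDivisor.
Variables (l : nat) (l_d : l \in primes d).

Let l_pr : prime l. Proof. by move: l_d; rewrite mem_primes => /andP[]. Qed.
Lemma d2_divlK : (d2 %/ l * l)%N = d2.
Proof. by rewrite divnK // d2_gcdE dvdn_mulr //; move: l_d; rewrite mem_primes => /and3P[]. Qed.
Lemma d2_divl_gt0 : (0 < d2 %/ l)%N.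
Proof. by move: d2_gt0; rewrite -{1}d2_divlK muln_gt0 => /andP[]. Qed.

Lemma logn_codeg_subfield : logn p #|codeg_subfield l| = (d2 %/ l)%N.
Proof.
rewrite (card_frobenius_fixed p_pr card_F2) ?pfactorK ?d2_divl_gt0 //.
by rewrite -{2}d2_divlK dvdn_mulr.
Qed.

Lemma codeg_subfield_neqT : codeg_subfield l != setT.
Proof.
rewrite (subfield_eqT p_pr card_F2 (subfield_codeg_subfield l)) logn_codeg_subfield.
by rewrite neq_ltn ltn_Pdiv ?prime_gt1 ?d2_gt0.
Qed.

Lemma common_sub_codeg_subfield : common_subfield \subset codeg_subfield l.
Proof.
rewrite (subfield_subsetE p_pr card_F2 subfield_common (subfield_codeg_subfield l)).
rewrite card_common_subfield logn_codeg_subfield pfactorK // [in (d2 %/ l)%N]d2_gcdE.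
by rewrite -divn_mulAC ?dvdn_mull //; move: l_d; rewrite mem_primes => /and3P[].
Qed.

Lemma maximal_codeg_subfield :
  maximal_subfield (codeg_subfield l) && contains_int i1 i2 (codeg_subfield l).
Proof.
rewrite contains_intE common_sub_codeg_subfield andbT /maximal_subfield.
rewrite subfield_codeg_subfield codeg_subfield_neqT.
apply/forallP => K'; apply/implyP => /andP[subfield_K' ltK'].
have /dvdnP[s eK'] : (d2 %/ l %| logn p #|K'|)%N.
  rewrite -logn_codeg_subfield -(subfield_subsetE p_pr card_F2) ?subfield_codeg_subfield //.
  exact: proper_sub.
have : (s %| l)%N.
  have := logn_card_subfield_dvd p_pr card_F2 subfield_K'.
  by rewrite eK' -{2}d2_divlK mulnC dvdn_pmul2l ?d2_divl_gt0.
case/primeP: l_pr => _ /[apply] /orP[] /eqP s_eq.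
  move: (proper_card ltK'); rewrite (card_subfieldE p_pr card_F2 subfield_K') eK' s_eq mul1n.
  by rewrite -logn_codeg_subfield -(card_subfieldE p_pr card_F2) ?subfield_codeg_subfield // ltnn.
by rewrite (subfield_eqT p_pr card_F2 subfield_K') eK' s_eq mulnC d2_divlK.
Qed.

End PrimeDivisor.

Lemma sub_codeg_subfield S : is_subfield S -> common_subfield \subset S -> S != setT ->
  exists2 l, l \in primes d & S \subset codeg_subfield l.
Proof.
move=> subfield_S commonS S_neqT; set e := logn p #|S|.
have /dvdnP[t d2E] : (e %| d2)%N by apply: logn_card_subfield_dvd subfield_S.
have /dvdnP[e' eE] : (g %| e)%N.
  move: commonS; rewrite (subfield_subsetE p_pr card_F2 subfield_common subfield_S).
  by rewrite card_common_subfield pfactorK.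
have t_gt1 : (1 < t)%N.
  have t_gt0 : (0 < t)%N by move: d2_gt0; rewrite d2E muln_gt0 => /andP[].
  rewrite ltn_neqAle eq_sym t_gt0 andbT; apply: contraNneq S_neqT => t1.
  by rewrite (subfield_eqT p_pr card_F2 subfield_S) -/e d2E t1 mul1n.
have dE : d = (t * e')%N.
  by apply/eqP; rewrite -(eqn_pmul2r g_gt0) -d2_gcdE {1}d2E eE mulnA.
have l_d : pdiv t \in primes d.
  by rewrite mem_primes pdiv_prime // d_gt0 dE dvdn_mulr ?pdiv_dvd.
exists (pdiv t) => //.
rewrite (subfield_subsetE p_pr card_F2 subfield_S (subfield_codeg_subfield _)).
rewrite logn_codeg_subfield // -/e.
by rewrite [in (d2 %/ _)%N]d2E -divn_mulAC ?pdiv_dvd // dvdn_mull.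
Qed.

Lemma codeg_subfieldP K : maximal_subfield K -> contains_int i1 i2 K ->
  exists2 l, l \in primes d & K = codeg_subfield l.
Proof.
case/and3P=> subfield_K K_neqT /forallP maxK; rewrite contains_intE => commonK.
have [l l_d leK] := sub_codeg_subfield subfield_K commonK K_neqT.
exists l => //; apply/eqP; apply: contraNT (codeg_subfield_neqT l_d) => K_neq.
by apply: (implyP (maxK (codeg_subfield l))); rewrite subfield_codeg_subfield properEneq K_neq leK.
Qed.

Lemma card_maximal_subfields :
  #|[set K : {set F2} | maximal_subfield K && contains_int i1 i2 K]| = omega d.
Proof.
have codeg_subfield_inj : {in primes d &, injective codeg_subfield}.
  move=> l l' l_d l'_d eK.
  have e : (d2 %/ l = d2 %/ l')%N by rewrite -!logn_codeg_subfield // eK.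
  have := d2_divlK l_d; rewrite e -{2}(d2_divlK l'_d) => /eqP.
  by rewrite eqn_pmul2l ?d2_divl_gt0 // => /eqP.
rewrite /omega -(size_map codeg_subfield) -(card_uniqP _); last first.
  by rewrite map_inj_in_uniq ?primes_uniq.
apply: eq_card => K; rewrite inE; apply/idP/mapP => [/andP[maxK commonK] | [l l_d ->]].
  by have [l l_d ->] := codeg_subfieldP maxK commonK; exists l.
exact: maximal_codeg_subfield.
Qed.

Definition poly_values (lam : F) :=
  [set x : F | pb (exists Q : {poly F1}, x = (map_poly i1 Q).[lam])].

Lemma poly_values_eval lam Q : (map_poly i1 Q).[lam] \in poly_values lam.
Proof. by rewrite inE; apply/pbP; exists Q. Qed.

Lemma poly_valuesP lam x :
  x \in poly_values lam -> exists Q : {poly F1}, x = (map_poly i1 Q).[lam].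
Proof. by rewrite inE => /pbP. Qed.

Lemma poly_values_rmorph lam x : i1 x \in poly_values lam.
Proof. by have := poly_values_eval lam x%:P; rewrite map_polyC hornerC. Qed.

Lemma subfield_poly_values lam : is_subfield (poly_values lam).
Proof.
have valM : {in poly_values lam &, forall x y, x * y \in poly_values lam}.
  move=> _ _ /poly_valuesP[P ->] /poly_valuesP[Q ->].
  by rewrite -hornerM -rmorphM poly_values_eval.
have val1 : 1 \in poly_values lam by rewrite -(rmorph1 i1) poly_values_rmorph.
apply/and3P; split => //.
  apply/forall_inP => _ /poly_valuesP[P ->]; apply/forall_inP => _ /poly_valuesP[Q ->].
  by rewrite valM ?poly_values_eval // -hornerN -hornerD -rmorphB poly_values_eval.
apply/forall_inP => x x_val; apply/implyP => x_neq0; rewrite finField_invE //.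
by elim: (#|F|.-2) => [|k IHk]; rewrite ?expr0 ?exprS ?valM.
Qed.

Lemma poly_values_full b :
  ~ (exists2 K, maximal_subfield K && contains_int i1 i2 K & b \in K) ->
  poly_values (i2 b) = setT.
Proof.
move=> b_notin_max; set lam := i2 b; have subfield_R := subfield_poly_values lam.
have I1R : I1 \subset poly_values lam.
  by apply/subsetP => _ /imsetP[x _ ->]; apply: poly_values_rmorph.
have preR_full : i2 @^-1: poly_values lam = setT.
  apply/eqP; apply: contraT => preR_neqT.
  have commonR : common_subfield \subset i2 @^-1: poly_values lam.
    by rewrite common_subfieldE preimsetS.
  have [l l_d leR] := sub_codeg_subfield (subfield_preimset i2 subfield_R) commonR preR_neqT.
  case: b_notin_max; exists (codeg_subfield l); first exact: maximal_codeg_subfield.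
  apply: (subsetP leR); rewrite inE.
  by have := poly_values_eval lam 'X; rewrite map_polyX hornerX.
have I2R : I2 \subset poly_values lam.
  by apply/subsetP => _ /imsetP[y _ ->]; have := in_setT y; rewrite -preR_full inE.
apply/eqP; rewrite (subfield_eqT p_pr card_F subfield_R) eqn_dvd.
rewrite (logn_card_subfield_dvd p_pr card_F subfield_R) dvdn_lcm -logn_I1 -logn_I2.
by rewrite -!(subfield_subsetE p_pr card_F) ?I1R ?I2R.
Qed.

Lemma lam_comb_bij lam : poly_values lam = setT -> bijective (@lam_comb _ _ i1 d lam).
Proof.
(* A nonzero P of size <= d with P.[lam] = 0 would make every element of F the value
   of a polynomial of size < d, i.e. |F| <= |F1| ^ (d - 1). *)
move=> R_full; apply: inj_card_bij; last by rewrite card_mx mul1n card_F_d.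
move=> r r' eqr; apply/eqP; apply: contraT => r_neq; set P := rVpoly (r - r').
have P_neq0 : P != 0.
  apply: contra r_neq => /eqP/(congr1 (@poly_rV _ d)); rewrite /P rVpolyK linear0.
  by move/eqP; rewrite subr_eq0.
have P_lam : (map_poly i1 P).[lam] = 0.
  by rewrite /P linearB rmorphB hornerD hornerN -!lam_comb_rVpoly eqr subrr.
pose low (w : 'rV[F1]_d.-1) := (map_poly i1 (rVpoly w)).[lam].
have : [set: F] \subset low @: setT.
  apply/subsetP => x _; have /poly_valuesP[Q ->] : x \in poly_values lam by rewrite R_full.
  apply/imsetP; exists (poly_rV (Q %% P)) => //; rewrite /low poly_rV_K; last first.
    rewrite -ltnS prednK ?d_gt0 //.
    exact: leq_trans (ltn_modpN0 Q P_neq0) (size_poly _ _).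
  by rewrite {1}(divp_eq Q P) rmorphD rmorphM hornerD hornerM P_lam mulr0 add0r.
move/subset_leq_card/leq_trans/(_ (leq_imset_card _ _)).
rewrite !cardsT card_mx mul1n card_F_d leq_exp2l ?finNzRing_gt1 //.
by have := d_gt0; lia.
Qed.

Lemma CS_cover n :
  \bigcup_(v : 'cV[F]_n | v != 0) CS i1 i2 v \subset \bigcup_(M in Cset i1 i2 n d) M.
Proof.
apply/subsetP => -[A b] /bigcupP[v v_neq0 /CS_eigen Av].
have [[K maxK bK] | b_notin_max] :=
  pbP (exists2 K, maximal_subfield K && contains_int i1 i2 K & b \in K).
  by apply/bigcupP; exists (MK F1 n K); rewrite !inE //; apply/pbP; right; exists K.
have lam_bij := lam_comb_bij (poly_values_full b_notin_max).
have [U dimU stabU] := eigenvector_invariant_subspace lam_bij v_neq0 Av.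
apply/bigcupP; exists (TU F2 U); rewrite !inE; last exact/forall_inP.
by apply/pbP; left; exists U.
Qed.

Lemma card_Cset n : (d < n)%N -> #|Cset i1 i2 n d| = (qbinom #|F1| n d + omega d)%N.
Proof.
move=> lt_dn; set MS := [set K : {set F2} | maximal_subfield K && contains_int i1 i2 K].
set T1 := [set M : {set 'M[F1]_n * F2} |
  pb (exists U : {vspace 'cV[F1]_n}, \dim U = d /\ M = TU F2 U)].
have -> : Cset i1 i2 n d = T1 :|: MK F1 n @: MS.
  apply/setP => M; rewrite !inE; apply/pbP/orP.
    by case=> [TU_M | [K [MS_K ->]]]; [left; apply/pbP | right; apply: imset_f; rewrite inE].
  by case=> [/pbP TU_M | /imsetP[K /[!inE] MS_K ->]]; [left | right; exists K].
rewrite cardsU card_TU_dim ?d_gt0 // card_imset; last exact: MK_inj.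
rewrite card_maximal_subfields; suff -> : T1 :&: MK F1 n @: MS = set0 by rewrite cards0 subn0.
apply/setP => M; rewrite !inE; apply/andP => -[/pbP[U [dimU ->]] /imsetP[K]].
rewrite inE => /andP[/and3P[subfield_K _ _] _]; apply/eqP.
by rewrite TU_neq_MK ?dimU ?d_gt0 ?subfield1.
Qed.

End Setting.

Unset Implicit Arguments.

Theorem proposition4p4 (p n d1 d2 d : nat) (F1 F2 F : finFieldType)
  (i1 : {rmorphism F1 -> F}) (i2 : {rmorphism F2 -> F}) :
  prime p -> (3 <= n)%N ->
  #|F1| = (p ^ d1)%N -> #|F2| = (p ^ d2)%N -> #|F| = (p ^ lcmn d1 d2)%N ->
  #|F| = (#|F1| ^ d)%N ->
  (d < n - n %/ pdiv n)%N ->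
  (\bigcup_(v : 'cV[F]_n | v != 0) CS i1 i2 v
     \subset \bigcup_(M in Cset i1 i2 n d) M) /\
  #|Cset i1 i2 n d| = (qbinom #|F1| n d + omega d)%N.
Proof.
move=> p_pr _ card_F1 card_F2 card_F card_F_d lt_d.
split; first exact: CS_cover p_pr card_F1 card_F2 card_F card_F_d n.
exact: card_Cset p_pr card_F1 card_F2 card_F card_F_d n (leq_trans lt_d (leq_subr _ _)).
Qed.
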